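(* Let $L$ be a link diagram with a checkerboard shading. The set of unshaded regions admits an alternating signing if and only if the following holds: for every shaded region $R$ and every connected component $\Gamma$ of the boundary of $R$ that is not a simple closed loop without vertices, the number of edges of $\Gamma$ is even. The same statement holds with the roles of shaded and unshaded regions interchanged.
   Context: Diagrams: a link (knot) diagram is the underlying graph of a regular projection of a link (knot) into $S^2$. Its vertices are the crossings, each of valence 4, and over/under information is ignored. Components without crossings are closed loops, each regarded as one edge with no vertices. Regions are the connected components of $S^2\setminus L$. A vertex or edge is incident to a region if it lies in the boundary of that region. Two regions are adjacent if they are incident to a common edge. Checkerboard shading: a checkerboard shading is a shading of some regions such that, of any two adjacent regions, exactly one is shaded. Alternating signing: let $\mathcal R$ be either the set of shaded regions or the set of unshaded regions. An alternating signing of $\mathcal R$ is an assignment of a sign $+$ or $-$ to each region of $\mathcal R$ such that every vertex of the diagram is incident to two regions of $\mathcal R$ carrying opposite signs. A diagram with such a signing of its shaded or of its unshaded regions is called an alternating sign diagram. *)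

From mathcomp Require Import all_boot fingroup perm.
Set Implicit Arguments. Unset Strict Implicit. Unset Printing Implicit Defensive.

(* A link diagram L (its underlying 4-valent graph in S^2, crossing
   information ignored) is encoded as:
   - D    : the darts (half-edges) at the crossings; each crossing has 4;
   - rot  : the cyclic rotation of darts around their crossing (orientation
            of S^2); crossings (vertices) = rot-orbits, all of size 4;
   - ed   : fixed-point free involution pairing the two ends of an edge;
            edges = {d, ed d};
   - the boundary walks of the connected components with crossings are the
     orbits of  phi d := rot (ed d)  (dart d's walk follows the edge of d
     and contains the corner between rot^-1 d and d at the crossing of d);
   - nl   : number of crossing-free components (closed loops, one edge
            each, two sides: "in" and "out");
   - Reg  : the regions of S^2 \ L; regD d is the region of the walk of d,
            regIn i / regOut i the regions on the two sides of loop i.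
   Realisability in S^2: every map component is spherical (Euler formula,
   summed over components) and the bipartite incidence multigraph between
   components of L and regions (one edge per boundary walk) is a tree
   (connected, #vertices = #edges + 1). *)
Record diagram := Diagram {
  D : finType;
  nl : nat;
  Reg : finType;
  ed : {perm D};
  rot : {perm D};
  regD : D -> Reg;
  regIn : 'I_nl -> Reg;
  regOut : 'I_nl -> Reg
}.
Arguments regD : clear implicits.
Arguments regIn : clear implicits.
Arguments regOut : clear implicits.

Definition phi (L : diagram) (d : D L) : D L := rot L (ed L d).

Definition map_adj (L : diagram) : rel (D L) :=
  [rel x y | (y == ed L x) || (y == rot L x) || (x == rot L y)].
Arguments map_adj : clear implicits.

Definition node (L : diagram) : finType := ((D L + 'I_(nl L)) + Reg L)%type.

Definition node_adj (L : diagram) : rel (node L) :=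
  fun x y =>
  match x, y with
  | inl (inl a), inl (inl b) => map_adj L a b || map_adj L b a
  | inl (inl a), inr r | inr r, inl (inl a) => regD L a == r
  | inl (inr i), inr r | inr r, inl (inr i) => (regIn L i == r) || (regOut L i == r)
  | _, _ => false
  end.
Arguments node_adj : clear implicits.

Definition link_diagram (L : diagram) : Prop :=
  [/\ (0 < #|D L| + nl L)%N,
      (forall d : D L, ed L (ed L d) = d /\ ed L d != d),
      (forall d : D L, fingraph.order (rot L) d = 4),
      (forall d : D L, regD L (phi d) = regD L d) &
    [/\
      (* each crossing component is a sphere: sum of V - E + F = 2 c *)
      fcard (rot L) (D L) + fcard (@phi L) (D L)
        = fcard (ed L) (D L) + 2 * n_comp (map_adj L) (D L),
      (forall x y : node L, connect (node_adj L) x y) &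
      (* tree: #regions + #components = #boundary walks + 1 *)
      #|Reg L| + (n_comp (map_adj L) (D L) + nl L)
        = fcard (@phi L) (D L) + 2 * nl L + 1 ] ].

Definition checkerboard (L : diagram) (sh : Reg L -> bool) : Prop :=
  (forall d : D L, sh (regD L d) != sh (regD L (ed L d))) /\
  (forall i : 'I_(nl L), sh (regIn L i) != sh (regOut L i)).

(* alternating signing of the set of regions R = {r | sh r = c}
   (c = false: unshaded regions, c = true: shaded regions).
   The regions incident to the crossing of d are the regD x, x at that
   crossing; a sign is a bool. *)
Definition alt_signing (L : diagram) (sh : Reg L -> bool) (c : bool) : Prop :=
  exists sign : Reg L -> bool,
    forall d : D L, exists x y : D L,
      [/\ fconnect (rot L) d x, fconnect (rot L) d y,
          sh (regD L x) = c, sh (regD L y) = c &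
          sign (regD L x) != sign (regD L y)].

Definition walk_edges (L : diagram) (d : D L) : nat :=
  #|[set [set x; ed L x] | x in [pred x | fconnect (@phi L) d x]]|.

(* The boundary
   components of R that are not vertex-free loops are exactly the walks
   (phi-orbits) of darts d with regD d = R. *)
Definition even_boundaries (L : diagram) (sh : Reg L -> bool) (c : bool) : Prop :=
  forall d : D L, sh (regD L d) = c -> ~~ odd (walk_edges d).

(* Easy direction: going once around a boundary walk of a shaded region, the
   unshaded regions met across consecutive crossings carry alternating signs,
   so the walk has even length.

   Converse: view the diagram as a cell decomposition of S^2 and work with
   F_2-chains.  Number the edges of every boundary walk of a shaded region
   alternately 0, 1, 0, 1, ...; evenness makes this consistent, and at every
   crossing the four edges receive two 0s and two 1s, so the result is a
   1-cycle.  Since H_1(S^2; F_2) = 0 it is the boundary of a 2-chain S, i.e.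
   the value on each edge is the sum of S over the two regions it separates.
   At a crossing the two unshaded regions are separated from the shaded region
   between them by two consecutive edges of its walk, whose values differ, so
   S takes different values on them: S is an alternating signing.  The
   vanishing of H_1 follows by counting, from Euler's formula, connectivity and
   the tree condition of the realisation in S^2. *)

From HB Require Import structures.
From Pilot Require Import Defs.
From mathcomp Require Import all_boot all_fingroup all_algebra zify.
Set Implicit Arguments. Unset Strict Implicit. Unset Printing Implicit Defensive.
Import GRing.Theory.

(* finite functions into a finite Z-module form a finite Z-module; the library
   declares the two structures of [{ffun A -> R}] but not their join *)
HB.instance Definition _ (A : finType) (R : finZmodType) := Finite.on {ffun A -> R}.

Lemma card_ker_mul_card_im (U V : finZmodType) (f : U -> V) :
  {morph f : x y / (x + y)%R} ->
  #|[set x | f x == 0%R]| * #|[set f x | x in [set: U]]| = #|U|.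
Proof.
move=> fD; have fM : morphic [set: U] f by apply/morphicP => x y _ _; apply: fD.
pose g := morphm_morphism fM.
have kerg : ('ker g)%g = [set x | f x == 0%R] by apply/setP => x; rewrite !inE.
have img : (g @* [set: U])%g = [set f x | x in [set: U]] by rewrite morphimEdom.
by rewrite -kerg -img card_morphim setTI (Lagrange (subsetT _)) cardsT.
Qed.

Lemma F2_addrr (x : 'F_2) : (x + x = 0)%R.
Proof. exact: addrr_pchar2 (pchar_Fp (isT : prime 2)) x. Qed.

Lemma F2_eq1_add (a b : 'F_2) : (a + b == 1)%R = ((a == 1)%R != (b == 1)%R).
Proof. by case: a b => [[|[|//]] ?] [[|[|//]] ?]. Qed.

Lemma F2_natr_eq (a b : bool) : (a%:R == b%:R :> 'F_2)%R = (a == b).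
Proof. by case: a; case: b. Qed.

Section Orbits.
Variables (T : finType) (f : T -> T).
Hypothesis f_inj : injective f.

Lemma order_even_of_flip (g : T -> bool) x :
  {in fconnect f x, forall y, g (f y) = ~~ g y} -> ~~ odd (fingraph.order f x).
Proof.
move=> gf; have giter n : g (iter n f x) = odd n (+) g x.
  elim: n => //= n IHn; rewrite gf ?IHn ?addNb //; exact: fconnect_iter.
by have := giter (fingraph.order f x); rewrite iter_order //; case: odd; case: (g x).
Qed.

Definition orbit_parity (y : T) : bool := odd (findex f (froot f y) y).

Lemma orbit_parity_next y :
  ~~ odd (fingraph.order f y) -> orbit_parity (f y) = ~~ orbit_parity y.
Proof.
have fsym : connect_sym (frel f) by move=> a b; apply: fconnect_sym.
move=> even_y; rewrite /orbit_parity.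
set r := froot f y; have ry : fconnect f r y by rewrite fsym connect_root.
have -> : froot f (f y) = r by apply/esym/(fingraph.rootP fsym); apply: fconnect1.
have order_r : fingraph.order f r = fingraph.order f y.
  by apply: eq_card => z; rewrite !inE (same_connect fsym ry).
have k_lt := findex_max ry; have yE := iter_findex ry.
set k := findex f r y in k_lt yE *.
have fyE : f y = iter k.+1 f r by rewrite /= yE.
case: (ltngtP k.+1 (fingraph.order f r)) => [lt_k|gt_k|eq_k].
- by rewrite fyE findex_iter.
- by move: gt_k; rewrite ltnS leqNgt k_lt.
- rewrite fyE eq_k iter_order // findex0 /=.
  by move: even_y; rewrite -order_r -eq_k /=; case: odd.
Qed.

End Orbits.

Section Diagram.
Variable L : diagram.
Local Notation ed := (Defs.ed L).
Local Notation rt := (Defs.rot L).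
Local Notation regD := (Defs.regD L).
Local Notation ma := (map_adj L).

Hypothesis edK : involutive ed.
Hypothesis ed_neq : forall d : D L, ed d != d.
Hypothesis order_rot : forall d : D L, fingraph.order rt d = 4.
Hypothesis regD_phi : forall d : D L, regD (phi d) = regD d.
Variable sh : Reg L -> bool.
Hypothesis sh_ed_neq : forall d : D L, sh (regD d) != sh (regD (ed d)).

Lemma phi_inj : injective (@phi L).
Proof. by move=> x y /perm_inj /perm_inj. Qed.

Lemma rot4 d : rt (rt (rt (rt d))) = d.
Proof. by have := iter_order (@perm_inj _ rt) d; rewrite order_rot. Qed.

Lemma fconnect_rotP d x :
  fconnect rt d x -> x \in [:: d; rt d; rt (rt d); rt (rt (rt d))].
Proof. by rewrite fconnect_orbit /fingraph.orbit order_rot. Qed.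

Lemma regD_rot d : regD (rt d) = regD (ed d).
Proof. by rewrite -[RHS]regD_phi /phi edK. Qed.

Lemma regD_fconnect_phi d x : fconnect (@phi L) d x -> regD x = regD d.
Proof. by move/iter_findex <-; elim: findex => //= n <-. Qed.

Lemma sh_ed d : sh (regD (ed d)) = ~~ sh (regD d).
Proof. by move: (sh_ed_neq d); case: (sh _); case: (sh _). Qed.

Lemma sh_rot d : sh (regD (rt d)) = ~~ sh (regD d).
Proof. by rewrite regD_rot sh_ed. Qed.

(* The two ends of an edge lie in regions of opposite shading, so they never
   share a walk. *)
Lemma walk_edges_order d : walk_edges d = fingraph.order (@phi L) d.
Proof.
rewrite /walk_edges card_in_imset; first by apply: eq_card.
move=> x y; rewrite !inE => dx dy xy; have : y \in [set x; ed x] by rewrite xy !inE eqxx.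
rewrite !inE => /orP [/eqP -> //| /eqP yE]; move: (sh_ed_neq x).
by rewrite -yE (regD_fconnect_phi dx) (regD_fconnect_phi dy) eqxx.
Qed.

Lemma alt_signing_even_boundaries c : alt_signing sh c -> even_boundaries sh (~~ c).
Proof.
move=> [sign signP] d sh_d; rewrite walk_edges_order.
apply: (order_even_of_flip phi_inj (g := fun x => sign (regD (rt x)))).
move=> y /regD_fconnect_phi regD_y; set x := phi y.
have sh_x : sh (regD x) = ~~ c by rewrite regD_phi regD_y.
have rot3_x : rt (rt (rt x)) = ed y by rewrite rot4.
have c_regions z : fconnect rt x z -> sh (regD z) = c ->
    regD z = regD (rt x) \/ regD z = regD (rt y).
  move=> /fconnect_rotP; rewrite !inE => /or4P [] /eqP ->; rewrite ?rot3_x -?regD_rot.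
  - by rewrite sh_x => /Bool.no_fixpoint_negb.
  - by left.
  - by rewrite 2!sh_rot sh_x !negbK => /Bool.no_fixpoint_negb.
  - by right.
have [x1 [x2 [x1P x2P sh1 sh2]]] := signP x.
case: (c_regions _ x1P sh1) => ->; case: (c_regions _ x2P sh2) => ->;
  by rewrite ?eqxx //; case: (sign _); case: (sign _).
Qed.

Lemma fconnect_sym_perm (f : {perm D L}) : connect_sym (frel f).
Proof. by move=> x y; apply/fconnect_sym/perm_inj. Qed.

Lemma ma_sym : connect_sym ma.
Proof.
apply: sym_connect_sym => x y; rewrite /map_adj /=.
by apply/idP/idP => /orP [/orP [/eqP ->|/eqP ->]|/eqP ->]; rewrite ?edK ?eqxx ?orbT.
Qed.

Lemma fconnect_edP y z : fconnect ed y z -> z = y \/ z = ed y.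
Proof.
move/iter_findex <-; elim: findex => [|k IHk] /=; first by left.
by case: IHk => ->; [right | left; rewrite edK].
Qed.

Definition edge := {x : D L | froot ed x == x}.

Definition edge_of (y : D L) : edge :=
  exist _ (froot ed y) (introT eqP (root_root (fconnect_sym_perm ed) y)).

Lemma froot_ed y : froot ed y = y \/ froot ed y = ed y.
Proof. exact/fconnect_edP/connect_root. Qed.

Lemma edge_of_eq y x : (edge_of y == edge_of x) = (y == x) || (y == ed x).
Proof.
rewrite -val_eqE /= root_connect; last exact: fconnect_sym_perm.
apply/idP/orP => [/fconnect_edP [->|->]|[/eqP->|/eqP->]]; rewrite ?edK.
- by left.
- by right.
- exact: connect0.
- by rewrite fconnect_sym_perm fconnect1.
Qed.

Definition cell := (edge + 'I_(nl L))%type.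

Definition vert (y : D L) : D L := froot rt y.

Lemma vert_rot y : vert (rt y) = vert y.
Proof. by apply/esym/(fingraph.rootP (fconnect_sym_perm rt))/fconnect1. Qed.

Lemma vert_eq x y : (vert x == vert y) = fconnect rt x y.
Proof. by rewrite root_connect //; apply: fconnect_sym_perm. Qed.

Local Open Scope ring_scope.

Definition bnd1 (z : {ffun cell -> 'F_2}) : {ffun D L -> 'F_2} :=
  [ffun v => \sum_(y | vert y == v) z (inl (edge_of y))].

Definition bnd2 (s : {ffun Reg L -> 'F_2}) : {ffun cell -> 'F_2} :=
  [ffun e => match e with
             | inl x => s (regD (val x)) + s (regD (ed (val x)))
             | inr i => s (regIn L i) + s (regOut L i) end].

Lemma bnd1D : {morph bnd1 : a b / a + b}.
Proof.
move=> a b; apply/ffunP => v; rewrite !ffunE -big_split.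
by apply: eq_bigr => y _; rewrite ffunE.
Qed.

Lemma bnd2D : {morph bnd2 : a b / a + b}.
Proof. by move=> a b; apply/ffunP => -[x|i]; rewrite !ffunE addrACA. Qed.

Lemma bnd2_edge_of s y : bnd2 s (inl (edge_of y)) = s (regD y) + s (regD (ed y)).
Proof. by rewrite ffunE /=; case: (froot_ed y) => ->; rewrite ?edK // addrC. Qed.

Lemma bnd1_bnd2 s : bnd1 (bnd2 s) = 0.
Proof.
apply/ffunP => v; rewrite !ffunE.
under eq_bigr => y _ do rewrite bnd2_edge_of -regD_rot.
rewrite big_split /= (reindex_inj (@perm_inj _ rt)) /=.
by under eq_bigl => y do rewrite vert_rot; rewrite F2_addrr.
Qed.

Hypothesis node_connected : forall x y : node L, connect (node_adj L) x y.

(* a 2-chain without boundary takes the same value on the two sides of every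
   edge and loop, hence is constant along the connected incidence structure *)
Lemma bnd2_eq0_const s : bnd2 s = 0 -> forall r r', s r = s r'.
Proof.
move=> s_cycle; have sides e : bnd2 s e = 0 by rewrite s_cycle ffunE.
have sE x y : x + y = 0 -> x = y :> 'F_2.
  by move=> xy0; rewrite -[y]add0r -xy0 -addrA F2_addrr addr0.
have s_ed y : s (regD y) = s (regD (ed y)) by apply: sE; rewrite -bnd2_edge_of.
have s_loop i : s (regIn L i) = s (regOut L i).
  by apply: sE; have := sides (inr i); rewrite ffunE.
have s_ma a b : ma a b -> s (regD a) = s (regD b).
  by case/orP => [/orP [] | ] /eqP ->; rewrite ?regD_rot // -s_ed.
pose val_node (n : node L) := match n with
  | inl (inl a) => s (regD a) | inl (inr i) => s (regIn L i) | inr r => s r end.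
have val_adj x y : node_adj L x y -> val_node x = val_node y.
  case: x y => [[a|i]|r] [[b|j]|r'] //=.
  - by case/orP => /s_ma.
  - by move/eqP <-.
  - by case/orP => /eqP <-; rewrite ?s_loop.
  - by move/eqP ->.
  - by case/orP => /eqP <-; rewrite ?s_loop.
move=> r r'; have val_closed : closed (node_adj L) [pred n | val_node n == s r].
  by move=> x y /val_adj xy; rewrite !inE xy.
have := closed_connect val_closed (node_connected (inr r) (inr r')).
by rewrite !inE eqxx => /esym/eqP.
Qed.

Lemma card_ker_bnd2 : (#|[set s | bnd2 s == 0%R]| <= 2)%N.
Proof.
suff /subset_leq_card :
    [set s | bnd2 s == 0] \subset [set (0 : {ffun Reg L -> 'F_2}); [ffun => 1]].
  by move/leq_trans; apply; rewrite cards2; case: (_ != _).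
apply/subsetP => s; rewrite !inE => /eqP /bnd2_eq0_const s_const.
case: (pickP (@predT (Reg L))) => [r0 _ | no_reg]; last first.
  by apply/orP; left; apply/eqP/ffunP => r; have := no_reg r.
by case: (s r0) (s_const ^~ r0) => [[|[|//]] ?] s_r0; apply/orP;
  [left | right]; apply/eqP/ffunP => r; rewrite !ffunE s_r0; apply: val_inj.
Qed.

Definition delta (v : D L) : {ffun D L -> 'F_2} := [ffun w => (w == v)%:R].

Definition boundaries1 := [set bnd1 z | z in [set: {ffun cell -> 'F_2}]].

Lemma boundaries1_0 : 0 \in boundaries1.
Proof.
apply/imsetP; exists 0; rewrite ?inE //.
by apply/ffunP => v; rewrite !ffunE big1 // => y _; rewrite ffunE.
Qed.

Lemma boundaries1D a b : a \in boundaries1 -> b \in boundaries1 -> a + b \in boundaries1.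
Proof.
move=> /imsetP [za _ ->] /imsetP [zb _ ->].
by apply/imsetP; exists (za + zb); rewrite ?inE ?bnd1D.
Qed.

Lemma bnd1_edge x :
  bnd1 [ffun e => (e == inl (edge_of x))%:R] = delta (vert x) + delta (vert (ed x)).
Proof.
apply/ffunP => v; rewrite !ffunE.
under eq_bigr => y _ do rewrite ffunE (inj_eq (@inl_inj _ _)) edge_of_eq.
rewrite big_mkcond (bigD1 x) //= (bigD1 (ed x)) ?ed_neq //=.
rewrite big1 => [|y /andP [/negbTE-> /negbTE->]].
  rewrite addr0 eqxx (negbTE (ed_neq x)) /= eqxx ![v == _]eq_sym.
  by case: (vert x == v); case: (vert (ed x) == v).
by case: (_ == v).
Qed.

Lemma connect_boundaries1 x y :
  connect ma x y -> delta (vert x) + delta (vert y) \in boundaries1.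
Proof.
have delta_self v : delta v + delta v = 0 by apply/ffunP => w; rewrite !ffunE F2_addrr.
move/connectP => [p]; elim: p x => [|x' p IHp] x /=.
  by move=> _ ->; rewrite delta_self boundaries1_0.
case/andP => xx' x'p lastp.
have step : delta (vert x) + delta (vert x') \in boundaries1.
  move: xx' => /orP [/orP [] | ] /eqP ->; rewrite ?vert_rot ?delta_self ?boundaries1_0 //.
  by apply/imsetP; eexists; [|symmetry; apply: bnd1_edge].
have := boundaries1D step (IHp x' x'p lastp).
by rewrite -addrA [in X in _ + X]addrA delta_self add0r.
Qed.

Definition crossings := [set v : D L | vert v == v].

Definition base (v : D L) : D L := vert (fingraph.root ma v).

Definition nonbase := crossings :\: [set v | base v == v].

Lemma card_crossings : #|crossings| = fcard rt (D L).
Proof. by apply: eq_card => x; rewrite !inE andbT. Qed.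

Lemma base_vert w : base (vert w) = base w.
Proof.
congr vert; apply/esym/(fingraph.rootP ma_sym).
apply: connect_sub (connect_root _ w) => a b /eqP <-.
by apply: connect1; rewrite /map_adj /= eqxx orbT.
Qed.

Lemma base_id v : base (base v) = base v.
Proof. by rewrite base_vert /base root_root //; apply: ma_sym. Qed.

Lemma card_crossings_le : (#|crossings| <= #|nonbase| + n_comp ma (D L))%N.
Proof.
rewrite /nonbase -(cardsID [set v | base v == v] crossings) addnC leq_add2l.
rewrite -(@card_in_imset _ _ (fingraph.root ma)) => [|v w]; last first.
  by rewrite !inE => /andP [_ /eqP vE] /andP [_ /eqP wE] vw; rewrite -vE -wE /base vw.
apply/subset_leq_card/subsetP => _ /imsetP [v _ ->].
by rewrite inE /= roots_root //; apply: ma_sym.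
Qed.

(* every subset [A] of the non-base crossings yields the boundary
   [\sum_(v in A) (delta v + delta (base v))], and these are pairwise distinct *)
Lemma card_nonbase : (2 ^ #|nonbase| <= #|boundaries1|)%N.
Proof.
pose u (A : {set D L}) := \sum_(v in A) (delta v + delta (base v)).
have uE (A : {set D L}) w : A \subset nonbase -> w \in nonbase -> u A w = (w \in A)%:R.
  move=> /subsetP A_nb w_nb; rewrite /u sum_ffunE.
  rewrite (eq_bigr (fun v => (w == v)%:R)) => [|v /A_nb]; last first.
    move: w_nb; rewrite !inE !ffunE => /andP [w_nb _] /andP [v_nb _].
    suff /negbTE-> : w != base v by rewrite addr0.
    by apply: contra w_nb => /eqP ->; rewrite base_id.
  case: (boolP (w \in A)) => [wA | wA]; last first.
    by rewrite big1 // => v vA; case: eqP vA wA => // -> ->.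
  rewrite (bigD1 w) //= eqxx big1 ?addr0 // => v /andP [_ /negbTE].
  by rewrite eq_sym => ->.
rewrite -card_powerset -(@card_in_imset _ _ u) => [|A B]; last first.
  rewrite !inE => A_nb B_nb uAB; apply/setP => w.
  case: (boolP (w \in nonbase)) => w_nb.
    by apply/eqP; rewrite -(F2_natr_eq) -!uE // uAB.
  by apply/idP/idP => [/(subsetP A_nb) | /(subsetP B_nb)]; rewrite (negbTE w_nb).
apply/subset_leq_card/subsetP => x /imsetP [A]; rewrite inE => /subsetP A_nb ->.
apply: (big_ind (fun x => x \in boundaries1)) => [|a b|v]; rewrite ?boundaries1_0 //.
  exact: boundaries1D.
move=> /A_nb; rewrite !inE => /andP [_ /eqP {1}<-].
exact/connect_boundaries1/connect_root.
Qed.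

Lemma card_boundaries1 :
  (2 ^ fcard rt (D L) <= 2 ^ n_comp ma (D L) * #|boundaries1|)%N.
Proof.
rewrite -card_crossings (leq_trans (leq_pexp2l _ card_crossings_le)) //.
by rewrite expnD mulnC leq_mul2l card_nonbase orbT.
Qed.

Hypothesis euler : (fcard rt (D L) + fcard (@phi L) (D L)
  = fcard ed (D L) + 2 * n_comp ma (D L))%N.
Hypothesis tree : (#|Reg L| + (n_comp ma (D L) + nl L)
  = fcard (@phi L) (D L) + 2 * nl L + 1)%N.

Lemma card_cell : #|{: cell}| = (fcard ed (D L) + nl L)%N.
Proof.
rewrite card_sum card_ord card_sig; congr (_ + _)%N.
by apply: eq_card => x; rewrite !inE andbT.
Qed.

(* H_1(S^2; F_2) = 0, obtained by counting: Euler's formula and the tree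
   condition make [#|ker bnd1| <= #|im bnd2|] *)
Lemma boundaries2_cycles1 :
  [set bnd2 s | s in [set: {ffun Reg L -> 'F_2}]] = [set z | bnd1 z == 0].
Proof.
apply/eqP; rewrite eqEcard; apply/andP; split.
  by apply/subsetP => _ /imsetP [s _ ->]; rewrite inE bnd1_bnd2.
have count1 := card_ker_mul_card_im bnd1D.
rewrite -/boundaries1 card_ffun card_Fp // card_cell in count1.
have count2 := card_ker_mul_card_im bnd2D; rewrite card_ffun card_Fp // in count2.
have exp_count : (2 ^ (fcard ed (D L) + nl L) * (2 * 2 ^ n_comp ma (D L))
    = 2 ^ fcard rt (D L) * 2 ^ #|Reg L|)%N.
  by rewrite -expnS -!expnD; congr (2 ^ _)%N; lia.
set a := #|[set z | _]| in count1 *; set b := #|boundaries1| in count1 *.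
set k := #|[set s | bnd2 s == 0%R]| in count2.
set m := #|[set bnd2 s | s in _]| in count2 *.
set P := (2 ^ fcard rt _)%N in exp_count *; set Q := (2 ^ n_comp _ _)%N in exp_count *.
rewrite -(@leq_pmul2r (2 * P)) ?muln_gt0 ?expn_gt0 //.
apply: (@leq_trans (a * (2 * (Q * b)))).
  by rewrite !leq_mul2l card_boundaries1 !orbT.
have -> : (a * (2 * (Q * b)) = a * b * (2 * Q))%N by nia.
rewrite count1 exp_count -count2.
by apply: leq_trans (leq_mul (leqnn P) (leq_mul card_ker_bnd2 (leqnn m))) _; nia.
Qed.

Section Cocycle.
Variable c : bool.
Hypothesis even_c : even_boundaries sh (~~ c).

Lemma exists_dart_at_crossing d : exists2 x, fconnect rt d x & sh (regD x) = ~~ c.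
Proof.
case: (boolP (sh (regD d) == ~~ c)) => [/eqP | sh_d]; first by exists d.
by exists (rt d); [apply: fconnect1 | rewrite sh_rot; move: sh_d; case: sh; case: (c)].
Qed.

Definition side (x : D L) : D L := if sh (regD x) == ~~ c then x else ed x.

Lemma side_ed x : side (ed x) = side x.
Proof. by rewrite /side sh_ed edK; case: (sh _); case: (c). Qed.

Lemma sides_at_crossing x : sh (regD x) = ~~ c ->
  [/\ side x = x, side (rt x) = ed (rt x), side (rt (rt x)) = rt (rt x)
    & side (rt (rt (rt x))) = ed (rt (rt (rt x)))].
Proof. by move=> sh_x; rewrite /side !sh_rot sh_x !negbK eqxx; case: (c). Qed.

Definition parity : D L -> bool := orbit_parity (@phi L).

Lemma parity_phi x : sh (regD x) = ~~ c -> parity (phi x) = ~~ parity x.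
Proof.
by move=> sh_x; apply: (orbit_parity_next phi_inj); rewrite -walk_edges_order even_c.
Qed.

(* [phi (ed (rt x)) = rt (rt x)] and [phi (ed (rt (rt (rt x)))) = x] *)
Lemma parity_at_crossing x : sh (regD x) = ~~ c ->
  parity (rt (rt x)) = ~~ parity (ed (rt x)) /\
  parity x = ~~ parity (ed (rt (rt (rt x)))).
Proof.
move=> sh_x; split; rewrite -parity_phi /phi ?edK ?rot4 //.
- by rewrite sh_ed sh_rot sh_x negbK.
- by rewrite sh_ed !sh_rot sh_x !negbK.
Qed.

Definition cocycle : {ffun cell -> 'F_2} :=
  [ffun e => if e is inl x then (parity (side (val x)))%:R else 0].

Lemma cocycle_edge_of y : cocycle (inl (edge_of y)) = (parity (side y))%:R.
Proof. by rewrite ffunE /=; case: (froot_ed y) => ->; rewrite ?side_ed. Qed.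

Lemma sum_fconnect_rot x (F : D L -> 'F_2) :
  \sum_(y | fconnect rt x y) F y = F x + F (rt x) + F (rt (rt x)) + F (rt (rt (rt x))).
Proof.
rewrite -big_filter (perm_big (fingraph.orbit rt x)).
  by rewrite /fingraph.orbit order_rot /= !big_cons big_nil addr0 !addrA.
apply: uniq_perm; rewrite ?filter_uniq ?orbit_uniq ?index_enum_uniq // => y.
by rewrite mem_filter -fconnect_orbit mem_index_enum andbT.
Qed.

Lemma bnd1_cocycle : bnd1 cocycle = 0.
Proof.
apply/ffunP => v; rewrite !ffunE.
case: (pickP (fun y => vert y == v)) => [y0 /eqP <- | no_y]; last by rewrite big_pred0.
have [x y0x sh_x] := exists_dart_at_crossing y0.
rewrite (eq_bigl (fconnect rt x)) => [|y]; last first.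
  by rewrite eq_sym vert_eq (same_connect (fconnect_sym_perm rt) y0x).
under eq_bigr do rewrite cocycle_edge_of.
rewrite sum_fconnect_rot; case: (sides_at_crossing sh_x) => -> -> -> ->.
case: (parity_at_crossing sh_x) => -> ->.
case: (parity (ed (rt x))); case: (parity (ed _));
  by rewrite /= ?(addr0, add0r, F2_addrr).
Qed.

Lemma even_boundaries_alt_signing : alt_signing sh c.
Proof.
have /imsetP [S _ S_bnd] : cocycle \in [set bnd2 s | s in [set: {ffun Reg L -> 'F_2}]].
  by rewrite boundaries2_cycles1 inE bnd1_cocycle.
exists (fun r => S r == 1) => d; have [x dx sh_x] := exists_dart_at_crossing d.
set w := rt (rt (rt x)); exists (rt x), w; split.
- exact: connect_trans dx (fconnect1 _ _).
- exact: connect_trans dx (fconnect_iter _ 3 x).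
- by rewrite sh_rot sh_x negbK.
- by rewrite /w !sh_rot sh_x !negbK.
have cocycle_x : cocycle (inl (edge_of x)) = S (regD x) + S (regD (rt x)).
  by rewrite S_bnd bnd2_edge_of regD_rot.
have cocycle_w : cocycle (inl (edge_of w)) = S (regD w) + S (regD x).
  by rewrite S_bnd bnd2_edge_of -regD_rot /w rot4.
have [side_x _ _ side_w] := sides_at_crossing sh_x.
have [_ parity_x] := parity_at_crossing sh_x.
rewrite !cocycle_edge_of side_x side_w in cocycle_x cocycle_w; rewrite -F2_eq1_add.
have -> : S (regD (rt x)) + S (regD w) = (parity x)%:R + (parity (ed w))%:R.
  by rewrite cocycle_x cocycle_w [S (regD w) + _]addrC addrACA F2_addrr add0r.
by rewrite parity_x; case: parity.
Qed.

End Cocycle.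

Lemma alt_signing_iff c : alt_signing sh c <-> even_boundaries sh (~~ c).
Proof.
by split; [apply: alt_signing_even_boundaries | apply: even_boundaries_alt_signing].
Qed.

End Diagram.

Theorem mainTheorem14 (L : diagram) (sh : Reg L -> bool) :
  link_diagram L -> checkerboard sh ->
  (alt_signing sh false <-> even_boundaries sh true) /\
  (alt_signing sh true <-> even_boundaries sh false).
Proof.
move=> [_ ed_inv order_rot regD_phi [euler node_connected tree]] [sh_ed_neq _].
have edK : involutive (ed L) by move=> d; case: (ed_inv d).
have ed_neq d : ed L d != d by case: (ed_inv d).
have iff :=
  alt_signing_iff edK ed_neq order_rot regD_phi sh_ed_neq node_connected euler tree.
by split; apply: iff.
Qed.
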